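(* Let $p,q\ge 1$ and let $M$ be a real $(p+q)\times(p+q)$ matrix of the form $$M=\begin{pmatrix}A&O\\ H&B\end{pmatrix}\quad\text{or}\quad M=\begin{pmatrix}A&H\\ O&B\end{pmatrix},$$ where $A$ is a $p\times p$ positive definite symmetric matrix, $B$ is a $q\times q$ negative definite symmetric matrix, $O$ is a zero block and $H$ is an arbitrary real matrix of the appropriate size. Then $M^{-1}M^{T}$ is conjugate in $GL(p+q,\mathbb R)$ to a symmetric matrix. Consequently the characteristic polynomial of $M^{-1}M^T$ has only real zeros. *)

From HB Require Import structures.
From mathcomp Require Import all_boot all_order all_algebra.
Set Implicit Arguments. Unset Strict Implicit. Unset Printing Implicit Defensive.
Import Order.TTheory GRing.Theory Num.Theory.
Local Open Scope ring_scope.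

Definition posdef_sym (R : realFieldType) (n : nat) (A : 'M[R]_n) : Prop :=
  A^T = A /\ forall v : 'rV[R]_n, v != 0 -> 0 < (v *m A *m v^T) 0 0.

Definition negdef_sym (R : realFieldType) (n : nat) (B : 'M[R]_n) : Prop :=
  B^T = B /\ forall v : 'rV[R]_n, v != 0 -> (v *m B *m v^T) 0 0 < 0.

From HB Require Import structures.
From mathcomp Require Import all_boot all_order all_algebra.
From mathcomp Require Import complex.
Import Order.TTheory GRing.Theory Num.Theory.
Set Implicit Arguments. Unset Strict Implicit.
Local Open Scope ring_scope.

(* 1. Over a real closed field every positive definite matrix is congruent to
      the identity (Cholesky/Sylvester, by induction with Schur complements):
      X^T A X = 1 and Y^T (-B) Y = 1 for invertible X, Y.
   2. With D = diag(X, Y), the congruent matrix K = D^T M D is block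
      unitriangular with diagonal (1, -1), hence an involution: K K = 1.
   3. Whenever D^T M D = K is an involution, M is invertible and
      D^-1 (M^-1 M^T) D = K K^T, which is symmetric.
   4. The characteristic polynomial is a similarity invariant, and that of a
      real symmetric matrix splits (spectral theorem, via the hermitian
      diagonalisation over R[i] available in MathComp); hence the
      characteristic polynomial of M^-1 M^T has only real roots. *)

Lemma congr_block_diag (R : comPzRingType) m n (P : 'M[R]_m) (Q : 'M[R]_n)
    Aul Aur Adl Adr :
  (block_mx P 0 0 Q)^T *m block_mx Aul Aur Adl Adr *m block_mx P 0 0 Q =
  block_mx (P^T *m Aul *m P) (P^T *m Aur *m Q) (Q^T *m Adl *m P) (Q^T *m Adr *m Q).
Proof.
by rewrite tr_block_mx !trmx0 !mulmx_block !mul0mx !mulmx0 ?addr0 ?add0r.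
Qed.

Section FieldMatrix.
Variable F : fieldType.

Lemma char_poly_conj n (P N : 'M[F]_n) : P \in unitmx ->
  char_poly (invmx P *m N *m P) = char_poly N.
Proof.
move=> Pu; rewrite /char_poly /char_poly_mx.
have XE : ('X%:M : 'M[{poly F}]_n) = map_mx polyC (invmx P) *m 'X%:M *m map_mx polyC P.
  by rewrite mul_mx_scalar -scalemxAl -map_mxM mulVmx // map_mx1 scalemx1.
rewrite [in LHS]XE !map_mxM -mulmxBl -mulmxBr !det_mulmx mulrC mulrA -det_mulmx.
by rewrite -map_mxM mulmxV // map_mx1 det1 mul1r.
Qed.

Lemma schur_congr n (a : F) (b : 'M[F]_(1, n)) (d : 'M[F]_n) : a != 0 ->
  exists2 Y : 'M[F]_(1 + n), Y \in unitmx &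
    Y^T *m block_mx a%:M b b^T d *m Y = block_mx a%:M 0 0 (d - a^-1 *: (b^T *m b)).
Proof.
move=> a0; exists (block_mx 1%:M (- a^-1 *: b) 0 1%:M).
  by rewrite unitmxE det_ublock !det1 mulr1 unitr1.
have elim_b : a%:M *m (- a^-1 *: b) + b = 0.
  by rewrite mul_scalar_mx scalerA mulrN mulfV // scaleN1r addNr.
have elim_bT : (- a^-1 *: b)^T *m a%:M + b^T = 0.
  by rewrite linearZ /= mul_mx_scalar scalerA mulrN mulfV // scaleN1r addNr.
rewrite tr_block_mx !trmx1 trmx0 !mulmx_block !mul1mx !mul0mx !mulmx1 !mulmx0.
rewrite ?addr0 ?add0r elim_b elim_bT mul0mx add0r linearZ /= -scalemxAl.
by rewrite scaleNr addrC.
Qed.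

End FieldMatrix.

(* Proof: view the
   matrix as a hermitian matrix over R[i] and use its unitary diagonalisation,
   whose diagonal entries are real. *)
Lemma char_poly_sym_split (R : rcfType) n (S : 'M[R]_n) : S^T = S ->
  exists rs : seq R, char_poly S = \prod_(r <- rs) ('X - r%:P).
Proof.
move=> Ssym; pose f := real_complex R; pose Sc := map_mx f S.
have Sherm : Sc \is hermsymmx.
  apply: realsym_hermsym.
    by apply/is_hermitianmxP; rewrite expr0 scale1r map_mx_id // /Sc map_trmx Ssym.
  by apply/mxOverP => i j; rewrite mxE; apply/complex_realP; eexists.
have diag_real := hermitian_spectral_diag_real Sherm.
have /orthomx_spectralP Sdiag := hermitian_normalmx Sherm.
exists [seq complex.Re (spectral_diag Sc 0 i) | i <- enum 'I_n].
apply: (@map_poly_inj _ _ f).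
rewrite map_char_poly -/Sc [in char_poly Sc]Sdiag char_poly_conj ?spectral_unit //.
rewrite char_poly_trig ?diag_mx_is_trig // rmorph_prod big_map big_enum /=.
apply: eq_bigr => i _; rewrite mxE eqxx mulr1n rmorphB /= map_polyX map_polyC /=.
by rewrite /f RRe_real //; move/mxOverP: diag_real => /(_ 0 i).
Qed.

Section Congruence.
Variable R : realFieldType.

Lemma posdef_congr n (A Y : 'M[R]_n) : Y \in unitmx -> posdef_sym A ->
  posdef_sym (Y^T *m A *m Y).
Proof.
move=> Yu [Asym Apos]; split; first by rewrite !trmx_mul trmxK Asym mulmxA.
move=> v v0; have -> : v *m (Y^T *m A *m Y) *m v^T = v *m Y^T *m A *m (v *m Y^T)^T.
  by rewrite trmx_mul trmxK !mulmxA.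
by apply: Apos; rewrite mulmx_free_eq0 // row_free_unit unitmx_tr.
Qed.

Lemma negdef_posdefN n (B : 'M[R]_n) : negdef_sym B -> posdef_sym (- B).
Proof.
case=> Bsym Bneg; split; first by rewrite linearN /= Bsym.
by move=> v v0; rewrite mulmxN mulNmx mxE oppr_gt0; apply: Bneg.
Qed.

(* The two diagonal blocks of a positive definite block matrix are positive
   definite: test it on vectors supported on one block. *)
Lemma posdef_block m n (Aul : 'M[R]_m) Aur Adl (Adr : 'M[R]_n) :
  posdef_sym (block_mx Aul Aur Adl Adr) -> posdef_sym Aul /\ posdef_sym Adr.
Proof.
case; rewrite tr_block_mx => /eq_block_mx [ulsym _ _ drsym] Apos; split; split=> //.
  move=> v v0; have := Apos (row_mx v 0); rewrite row_mx_eq0 (negPf v0) => /(_ isT).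
  by rewrite mul_row_block tr_row_mx mul_row_col !mul0mx !addr0 trmx0 mulmx0 addr0.
move=> v v0; have := Apos (row_mx 0 v); rewrite row_mx_eq0 (negPf v0) andbF => /(_ isT).
by rewrite mul_row_block tr_row_mx mul_row_col !mul0mx !add0r trmx0 mulmx0 add0r.
Qed.

Lemma posdef_scalar1 (a : R) : posdef_sym (a%:M : 'M_1) -> 0 < a.
Proof.
case=> _ /(_ 1%:M); rewrite oner_eq0 => /(_ isT).
by rewrite mul1mx tr_scalar_mx mulmx1 mxE eqxx mulr1n.
Qed.

End Congruence.

Section CongruenceToIdentity.
Variable R : rcfType.

Definition congr_id n (A : 'M[R]_n) :=
  exists2 X : 'M[R]_n, X \in unitmx & X^T *m A *m X = 1%:M.

(* Inductive step: split off the first coordinate by a Schur complement,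
   which is again positive definite, and normalise the positive corner a by
   the congruence with the scalar 1 / sqrt a. *)
Lemma posdef_congr_id_step n :
    (forall C : 'M[R]_n, posdef_sym C -> congr_id C) ->
  forall A : 'M[R]_(1 + n), posdef_sym A -> congr_id A.
Proof.
move=> IH A PA.
have [a [b [c [d Adef]]]] : exists a b c d, A = block_mx a b c d.
  by exists (ulsubmx A), (ursubmx A), (dlsubmx A), (drsubmx A); rewrite submxK.
move: PA; rewrite {}Adef => PA; have [Asym _] := PA; move: PA.
rewrite tr_block_mx in Asym; case/eq_block_mx: Asym => _ _ <- _ {c}.
rewrite [a]mx11_scalar; set a0 := a 0 0 => PA.
have a0_gt0 : 0 < a0 by apply: posdef_scalar1 (posdef_block PA).1.
have [Y Yu YA] := schur_congr b d (lt0r_neq0 a0_gt0).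
have := posdef_congr Yu PA; rewrite YA => /posdef_block[_ /IH[X Xu XC]].
pose s := Num.sqrt a0; have s_gt0 : 0 < s by rewrite sqrtr_gt0.
pose Z : 'M[R]_(1 + n) := block_mx (s^-1)%:M 0 0 X.
exists (Y *m Z).
  by rewrite unitmx_mul Yu unitmxE det_ublock det_scalar1 unitrM -unitmxE Xu
    unitfE invr_eq0 gt_eqF.
have -> : (Y *m Z)^T *m block_mx a0%:M b b^T d *m (Y *m Z) =
    Z^T *m (Y^T *m block_mx a0%:M b b^T d *m Y) *m Z by rewrite trmx_mul !mulmxA.
rewrite YA congr_block_diag XC tr_scalar_mx !mulmx0 !mul0mx -!scalar_mxM.
rewrite [1%:M in RHS]scalar_mx_block; congr (block_mx (_ %:M) _ _ _).
by rewrite mulrAC -expr2 exprVn sqr_sqrtr ?ltW // mulVf ?gt_eqF.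
Qed.

Lemma posdef_congr_id n (A : 'M[R]_n) : posdef_sym A -> congr_id A.
Proof.
elim: n A => [|n IH] A PA; last exact: posdef_congr_id_step.
by exists 1%:M; [rewrite unitmxE det_mx00 unitr1 | apply/matrixP => -[]].
Qed.

End CongruenceToIdentity.

Lemma block_involution (R : pzRingType) p q (G1 : 'M[R]_(p, q)) (G2 : 'M[R]_(q, p)) :
    G1 *m G2 = 0 -> G2 *m G1 = 0 ->
  block_mx 1%:M G1 G2 (- 1%:M) *m block_mx 1%:M G1 G2 (- 1%:M) = 1%:M.
Proof.
move=> G12 G21; rewrite mulmx_block G12 G21 !mulmxN !mulNmx !mul1mx !mulmx1.
by rewrite opprK addr0 add0r !subrr -scalar_mx_block.
Qed.

Section InvolutiveCongruence.
Variables (F : fieldType) (n : nat) (M D : 'M[F]_n).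
Hypothesis D_unit : D \in unitmx.

(* If M is congruent, through D, to an involution K, then M is invertible and
   M^-1 M^T is conjugate, through D, to K K^T: indeed
   K (D^-1 M^-1 M^T D) = D^T M^T D = K^T. *)
Let K := D^T *m M *m D.
Hypothesis K_involutive : K *m K = 1%:M.

Lemma involutive_congr_unit : M \in unitmx.
Proof.
have /mulmx1_unit[Ku _] := K_involutive.
by move: Ku; rewrite !unitmx_mul => /andP[/andP[_ ->]].
Qed.

Lemma involutive_congr_conj : invmx D *m (invmx M *m M^T) *m D = K *m K^T.
Proof.
have Mu := involutive_congr_unit.
have KL : K *m (invmx D *m (invmx M *m M^T) *m D) = K^T.
  rewrite /K !trmx_mul trmxK !mulmxA mulmxK // -[_ *m M *m invmx M]mulmxA.
  by rewrite mulmxV // mulmx1.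
by rewrite -[in RHS]KL (mulmxA K K) K_involutive mul1mx.
Qed.

End InvolutiveCongruence.

Theorem proposition4p9 (R : rcfType) (p q : nat) (hp : (0 < p)%N) (hq : (0 < q)%N)
  (A : 'M[R]_p) (B : 'M[R]_q) (M : 'M[R]_(p + q))
  (hA : posdef_sym A) (hB : negdef_sym B)
  (hM : (exists H : 'M[R]_(q, p), M = block_mx A 0 H B) \/
        (exists H : 'M[R]_(p, q), M = block_mx A H 0 B)) :
  (exists (P S : 'M[R]_(p + q)),
      P \in unitmx /\ S^T = S /\ invmx P *m (invmx M *m M^T) *m P = S) /\
  (exists rs : seq R,
      char_poly (invmx M *m M^T) = \prod_(r <- rs) ('X - r%:P)).
Proof.
have [X Xu XA] := posdef_congr_id hA.
have [Y Yu YB] := posdef_congr_id (negdef_posdefN hB).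
have {}YB : Y^T *m B *m Y = - 1%:M by rewrite -YB mulmxN mulNmx opprK.
pose D := block_mx X 0 0 Y.
have Du : D \in unitmx by rewrite unitmxE det_ublock unitrM -!unitmxE Xu Yu.
have KK : (D^T *m M *m D) *m (D^T *m M *m D) = 1%:M.
  by case: hM => -[H ->]; rewrite congr_block_diag XA YB !mulmx0 !mul0mx;
    apply: block_involution; rewrite ?mulmx0 ?mul0mx.
have conjE := involutive_congr_conj Du KK; set K := D^T *m M *m D in conjE.
have KKT_sym : (K *m K^T)^T = K *m K^T by rewrite trmx_mul trmxK.
split; first by exists D, (K *m K^T).
by rewrite -(char_poly_conj _ Du) conjE; apply: char_poly_sym_split.
Qed.
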